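(* Let $n\ge 1$ and let $B\in\mathbb{R}^{n\times n}$ satisfy $B_{ij}\ge 0$ and $\sum_{j=1}^n B_{ij}\le 1$ for all $i,j\in\{1,\dots,n\}$. Let $\zeta=\frac{1}{n^2}\sum_{i=1}^n\sum_{j=1}^n \mathbb{1}(B_{ij}>0)$ and define the average repetition probability $R=\sum_{k=1}^\infty \operatorname{tr}\!\left(\frac{B^{2k}}{\zeta^k n^k}\right)$. If $\zeta n>\rho(B^2)$, then $$R=\operatorname{tr}\!\left(B^2(\zeta n I-B^2)^{-1}\right)\le \frac{\|B^2\|_*}{\sigma_n(\zeta n I-B^2)}.$$
   Context: $B$ is the sub-transition matrix of a Markov generation model over a vocabulary of $n$ words (the full transition matrix on $n+1$ states, the last being an absorbing end-of-sentence state, is $A=\begin{bmatrix}B & b\\ 0 & 1\end{bmatrix}$ with $b_i=1-\sum_{j}B_{ij}$). $\mathbb{1}(\cdot)$ is the indicator function, $\rho(\cdot)$ denotes the spectral radius, $\|\cdot\|_*$ the nuclear norm (sum of singular values), $\sigma_n(\cdot)$ the smallest singular value of an $n\times n$ matrix, and $I$ the $n\times n$ identity matrix. *)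

From HB Require Import structures.
From mathcomp Require Import all_boot all_order all_algebra.
From mathcomp Require Import all_classical all_reals all_analysis.
From mathcomp Require Import complex.
Set Implicit Arguments. Unset Strict Implicit. Unset Printing Implicit Defensive.
Import Order.TTheory GRing.Theory Num.Theory.
Local Open Scope ring_scope.

Section Spectral.
Variable R : realType.

Definition cmx n (A : 'M[R]_n) : 'M[R[i]]_n := map_mx (fun x => Complex x 0) A.

(* the complex eigenvalues of A, listed with algebraic multiplicity:
   the roots of the characteristic polynomial over C = R[i] *)
Definition eigvals n (A : 'M[R]_n) : seq R[i] :=
  sval (closed_field_poly_normal (char_poly (cmx A))).

Definition spectral_radius n (A : 'M[R]_n) : R :=
  \big[Num.max/0]_(z <- eigvals A) Normc.normc z.

(* singular values of A: square roots of the eigenvalues of A^T A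
   (these eigenvalues are real and nonnegative) *)
Definition singvals n (A : 'M[R]_n) : seq R :=
  [seq Num.sqrt (complex.Re z) | z <- eigvals (A^T *m A)].

Definition nuclear_norm n (A : 'M[R]_n) : R := \sum_(s <- singvals A) s.

Definition sigma_min n (A : 'M[R]_n) : R := head 0 (sort <=%R (singvals A)).

Definition zeta n (B : 'M[R]_n) : R :=
  (#|[set ij : 'I_n * 'I_n | 0 < B ij.1 ij.2]|%:R) / (n%:R ^+ 2).

Definition rep_term n (B : 'M[R]_n) (k : nat) : R :=
  \tr (B ^+ (2 * k)) / ((zeta B) ^+ k * n%:R ^+ k).

End Spectral.

(* Over C = R[i], a Schur triangularization B^2 = P^-1 T P puts the eigenvalues t_i
   of B^2 on the diagonal of T, so that tr (B^2k) = sum_i t_i^k and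
   tr (B^2 (c I - B^2)^-1) = sum_i t_i / (c - t_i) with c = zeta * n.
   As |t_i| <= rho (B^2) < c, the repetition series is a finite sum of convergent
   geometric series.
   For the bound, let the rows q_j of a unitary Q diagonalize (B^2)^T B^2, so that
   |q_j (B^2)^T| = sigma_j (B^2).  Then tr (B^2 M^-1) = sum_j <q_j M^-1, q_j (B^2)^T>,
   and by Cauchy-Schwarz each term is at most
   |q_j M^-1| sigma_j (B^2) <= sigma_j (B^2) / sigma_n (M). *)

From HB Require Import structures.
From mathcomp Require Import all_boot all_order all_algebra.
From mathcomp Require Import all_classical all_reals all_analysis.
From mathcomp Require Import complex ring.
Import Order.TTheory GRing.Theory Num.Theory.
Local Open Scope ring_scope.
Local Open Scope classical_set_scope.
Set Implicit Arguments. Unset Strict Implicit.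

Local Notation "''[' u , v ]" := (dotmx u v) : ring_scope.
Local Notation "''[' u ]" := (dotmx u u) : ring_scope.
Local Open Scope sesquilinear_scope.

Section TriangularMatrices.
Variable F : comNzRingType.

Lemma mulmx_is_trig m (A B : 'M[F]_m) :
  is_trig_mx A -> is_trig_mx B -> is_trig_mx (A *m B).
Proof.
move=> /is_trig_mxP tA /is_trig_mxP tB; apply/is_trig_mxP => i j lt_ij.
rewrite mxE big1 // => k _; have [lt_ik|le_ki] := ltnP i k.
  by rewrite tA ?mul0r.
by rewrite tB ?mulr0 // (leq_ltn_trans le_ki lt_ij).
Qed.

Lemma mulmx_trig_diag m (A B : 'M[F]_m) i :
  is_trig_mx A -> is_trig_mx B -> (A *m B) i i = A i i * B i i.
Proof.
move=> /is_trig_mxP tA /is_trig_mxP tB.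
rewrite mxE (bigD1 i) //= big1 ?addr0 // => k neq_ki.
have [lt_ik|lt_ki|eq_ik] := ltngtP i k.
- by rewrite tA ?mul0r.
- by rewrite tB ?mulr0.
- by move: neq_ki; rewrite -val_eqE /= eq_ik eqxx.
Qed.

Lemma exp_is_trig m (A : 'M[F]_m) p : is_trig_mx A -> is_trig_mx (A ^+ p).
Proof.
move=> tA; elim: p => [|p IHp]; first exact: scalar_mx_is_trig.
by rewrite exprS -mulmxE mulmx_is_trig.
Qed.

Lemma exp_trig_diag m (A : 'M[F]_m) p i :
  is_trig_mx A -> (A ^+ p) i i = A i i ^+ p.
Proof.
move=> tA; elim: p => [|p IHp]; first by rewrite !expr0 mxE eqxx.
by rewrite !exprS -mulmxE mulmx_trig_diag ?exp_is_trig // IHp.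
Qed.

Lemma mxtrace_exp_trig m (A : 'M[F]_m) p :
  is_trig_mx A -> \tr (A ^+ p) = \sum_i A i i ^+ p.
Proof. by move=> tA; apply: eq_bigr => i _; rewrite exp_trig_diag. Qed.

End TriangularMatrices.

Section TriangularInverse.
Variables (F : fieldType) (m : nat) (U : 'M[F]_m).
Hypothesis trigU : is_trig_mx U.

Lemma unitmx_trig : (U \in unitmx) = [forall i, U i i != 0].
Proof.
rewrite unitmxE det_trig // unitfE prodf_seq_neq0.
apply/allP/forallP => [nzU i|nzU i _]; last exact: nzU.
exact: nzU (mem_index_enum i).
Qed.

Hypothesis unitU : U \in unitmx.

Lemma invmx_is_trig : is_trig_mx (invmx U).
Proof.
have /forallP nzU : [forall i, U i i != 0] by rewrite -unitmx_trig.
have /matrixP VU := mulVmx unitU; set V := invmx U in VU *.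
(* (V U) i j = V i j U j j + sum_(k > j) V i k U k j: induction on the columns,
   from the right. *)
apply/is_trig_mxP => i j; move: {2}(m - j)%N (leqnn (m - j)) => d.
elim: d => [|d IHd] in j *.
  by rewrite leqn0 subn_eq0 leqNgt ltn_ord.
move=> le_d lt_ij; have := VU i j.
rewrite !mxE (bigD1 j) //= big1 -?val_eqE /= ?(ltn_eqF lt_ij) ?addr0.
  by move/eqP; rewrite mulf_eq0 (negPf (nzU j)) orbF => /eqP.
move=> k neq_kj; have [lt_kj|lt_jk|eq_kj] := ltngtP k j.
- by rewrite (is_trig_mxP trigU) ?mulr0.
- rewrite IHd ?mul0r ?(ltn_trans lt_ij) //.
  by rewrite -ltnS (leq_trans (ltn_sub2l (ltn_ord j) lt_jk) le_d).
- by move: neq_kj; rewrite -val_eqE /= eq_kj eqxx.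
Qed.

Lemma invmx_trig_diag i : invmx U i i = (U i i)^-1.
Proof.
have /forallP nzU : [forall i, U i i != 0] by rewrite -unitmx_trig.
apply: (mulIf (nzU i)); rewrite mulVf // -mulmx_trig_diag ?invmx_is_trig //.
by rewrite mulVmx // mxE eqxx.
Qed.

End TriangularInverse.

Section TriangularResolvent.
Variables (F : fieldType) (m : nat) (T : 'M[F]_m) (c : F).
Hypotheses (trigT : is_trig_mx T) (c_notin_diag : forall i, T i i != c).

Let trig_resolvent : is_trig_mx (c%:M - T).
Proof.
apply/is_trig_mxP => i j lt_ij; rewrite !mxE (is_trig_mxP trigT) //.
by rewrite -val_eqE /= ltn_eqF // subr0.
Qed.

Let resolvent_diag i : (c%:M - T) i i = c - T i i.
Proof. by rewrite !mxE eqxx. Qed.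

Lemma unitmx_resolvent_trig : c%:M - T \in unitmx.
Proof.
by rewrite unitmx_trig //; apply/forallP => i; rewrite resolvent_diag subr_eq0 eq_sym.
Qed.

Lemma mxtrace_resolvent_trig :
  \tr (T *m invmx (c%:M - T)) = \sum_i T i i / (c - T i i).
Proof.
have unitR := unitmx_resolvent_trig.
apply: eq_bigr => i _; rewrite mulmx_trig_diag ?invmx_trig_diag ?resolvent_diag //.
exact: invmx_is_trig.
Qed.

End TriangularResolvent.

Section Similarity.
Variables (F : fieldType) (m : nat) (P : 'M[F]_m).
Hypothesis unitP : P \in unitmx.

Lemma char_poly_similar X : char_poly (invmx P *m X *m P) = char_poly X.
Proof.
rewrite /char_poly /char_poly_mx.
pose Pp := map_mx polyC P; pose Pp' := map_mx polyC (invmx P).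
have Pp'Pp : Pp' *m Pp = 1%:M by rewrite -map_mxM mulVmx // map_mx1.
have -> : 'X%:M - map_mx polyC (invmx P *m X *m P)
          = Pp' *m ('X%:M - map_mx polyC X) *m Pp.
  rewrite !map_mxM mulmxBr mulmxBl -/Pp -/Pp'; congr (_ - _).
  by rewrite scalar_mxC -mulmxA Pp'Pp mulmx1.
by rewrite !det_mulmx mulrAC -det_mulmx Pp'Pp det1 mul1r.
Qed.

Lemma mxtrace_similar X : \tr (invmx P *m X *m P) = \tr X.
Proof. by rewrite mxtrace_mulC mulmxA mulmxV // mul1mx. Qed.

Lemma exp_similar X p : (invmx P *m X *m P) ^+ p = invmx P *m X ^+ p *m P.
Proof.
elim: p => [|p IHp]; first by rewrite !expr0 mulmx1 mulVmx.
by rewrite !exprS IHp -!mulmxE !mulmxA mulmxK.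
Qed.

Lemma invmx_similar X : X \in unitmx ->
  invmx (invmx P *m X *m P) = invmx P *m invmx X *m P.
Proof.
move=> unitX.
have unitY : invmx P *m X *m P \in unitmx.
  by rewrite !unitmx_mul unitmx_inv unitP unitX.
set Y := invmx P *m X *m P in unitY *.
have YY' : Y *m (invmx P *m invmx X *m P) = 1%:M.
  by rewrite !mulmxA mulmxK // mulmxK // mulVmx.
by rewrite -[LHS]mulmx1 -YY' mulKmx.
Qed.

Lemma resolvent_similar X c :
  c%:M - invmx P *m X *m P = invmx P *m (c%:M - X) *m P.
Proof. by rewrite mulmxBr mulmxBl scalar_mxC -mulmxA mulmxKV // mul_mx_scalar. Qed.

Variables (T : 'M[F]_m) (c : F).
Hypotheses (trigT : is_trig_mx T) (c_notin_diag : forall i, T i i != c).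

Lemma unitmx_resolvent_similar_trig : c%:M - invmx P *m T *m P \in unitmx.
Proof.
by rewrite resolvent_similar !unitmx_mul unitmx_inv unitP unitmx_resolvent_trig.
Qed.

Lemma mxtrace_resolvent_similar_trig :
  \tr (invmx P *m T *m P *m invmx (c%:M - invmx P *m T *m P))
  = \sum_i T i i / (c - T i i).
Proof.
rewrite resolvent_similar invmx_similar ?unitmx_resolvent_trig //.
rewrite !mulmxA mulmxK // -(mulmxA (invmx P)) mxtrace_similar.
exact: mxtrace_resolvent_trig.
Qed.

End Similarity.

Section DotProduct.
Variables (C : numClosedFieldType) (m : nat).
Implicit Types (u v : 'rV[C]_m) (Y Q : 'M[C]_m).

Lemma dotmx_mulmxl u v Y : '[u *m Y, v] = '[u, v *m Y^t*].
Proof. by rewrite !dotmxE trmx_mul map_mxM trmxCK mulmxA. Qed.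

Lemma dotmx_row Y Q j : '[row j Q *m Y, row j Q] = (Q *m Y *m Q^t*) j j.
Proof. by rewrite dotmxE -row_mul !mxE; apply: eq_bigr => k _; rewrite !mxE. Qed.

Lemma mxtrace_unitary Y Q : Q \is unitarymx -> \tr Y = \sum_j '[row j Q *m Y, row j Q].
Proof.
move=> unitaryQ; rewrite -[Y in LHS](mulKmx (unitarymx_unit unitaryQ)).
by rewrite invmx_unitary // mxtrace_mulC; apply: eq_bigr => j _; rewrite dotmx_row.
Qed.

(* By Cauchy-Schwarz, '[v Y^*]^2 = '[v, v Y^* Y]^2 <= '[v] '[v Y^* Y]. *)
Lemma dnorm_mulmx_adj_le Y (k : C) :
  (forall v, '[v *m Y] <= k * '[v]) -> forall v, '[v *m Y^t*] <= k * '[v].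
Proof.
move=> le_Y v; set y := v *m Y^t*.
have ge0_kv : 0 <= k * '[v] := le_trans (dnorm_ge0 _ _) (le_Y v).
have [->|nz_y] := eqVneq '[y] 0; first exact: ge0_kv.
have gt0_y : 0 < '[y] by rewrite lt_def nz_y dnorm_ge0.
rewrite -(ler_pM2l gt0_y) -expr2.
have yE : '[y] = '[v, y *m Y] by rewrite {1}/y dotmx_mulmxl trmxCK.
have [CS _] := CauchySchwarz (@dotmx C m) v (y *m Y).
have -> : '[y] ^+ 2 = `|'[v, y *m Y]| ^+ 2 by rewrite -yE ger0_norm ?dnorm_ge0.
rewrite (le_trans CS) //.
have -> : '[y] * (k * '[v]) = '[v] * (k * '[y]) by ring.
by rewrite ler_wpM2l ?dnorm_ge0 ?le_Y.
Qed.

Lemma spectral_form_ge Q (d : 'rV[C]_m) s u :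
  Q \is unitarymx -> (forall j, s <= d 0 j) ->
  s * '[u] <= (u *m (invmx Q *m diag_mx d *m Q) *m u^t*) 0 0.
Proof.
move=> unitaryQ le_sd; set v := u *m Q^t*.
have -> : (u *m (invmx Q *m diag_mx d *m Q) *m u^t*) 0 0
          = (v *m diag_mx d *m v^t*) 0 0.
  by rewrite /v invmx_unitary // trmx_mul map_mxM trmxCK !mulmxA.
have -> : '[u] = '[v].
  rewrite /v dotmx_mulmxl trmxCK -mulmxA -invmx_unitary //.
  by rewrite mulVmx ?unitarymx_unit ?mulmx1.
rewrite dotmxE !mxE mulr_sumr -subr_ge0 -sumrB sumr_ge0 // => k _.
rewrite mul_mx_diag !mxE mulrAC [s * _]mulrC -mulrBr.
by rewrite mulr_ge0 ?subr_ge0 ?mul_conjC_ge0.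
Qed.

End DotProduct.

Lemma head_sort_le (R : realDomainType) (s : seq R) y :
  y \in s -> head 0 (sort <=%R s) <= y.
Proof.
rewrite -(mem_sort <=%R); have := sort_le_sorted s.
case: (sort _ s) => [//|x t] /= sorted_xt; rewrite inE => /predU1P[->//|ty].
by have /allP := order_path_min le_trans sorted_xt; apply.
Qed.

Lemma head_sort_mem (R : realDomainType) (s : seq R) :
  s != [::] -> head 0 (sort <=%R s) \in s.
Proof.
rewrite -(mem_sort <=%R) -size_eq0 -(size_sort <=%R).
by case: (sort _ s) => [//|x t] _; rewrite mem_head.
Qed.

Lemma geometric_series_err (C : numFieldType) (r q : C) K :
  `|r| <= q -> q < 1 ->
  `|\sum_(0 <= k < K) r ^+ k.+1 - r / (1 - r)| <= q ^+ K.+1 / (1 - q).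
Proof.
move=> le_rq lt_q1; have lt_0_1q : 0 < 1 - q by rewrite subr_gt0.
have le_1q : 1 - q <= `|1 - r|.
  by rewrite (le_trans _ (lerB_dist _ _)) // normr1 lerD2l lerN2.
have nz_1r : 1 - r != 0 by rewrite -normr_gt0 (lt_le_trans lt_0_1q).
have -> : \sum_(0 <= k < K) r ^+ k.+1 = r * (1 - r ^+ K) / (1 - r).
  transitivity (series (geometric r r) K).
    by rewrite seriesEnat; apply: eq_bigr => k _; rewrite exprS.
  by rewrite geometric_seriesE // eq_sym -subr_eq0.
have -> : r * (1 - r ^+ K) / (1 - r) - r / (1 - r) = - (r ^+ K.+1 / (1 - r)).
  by rewrite exprS; field.
rewrite normrN normrM normfV normrX ler_pM ?exprn_ge0 ?invr_ge0 //.
  by rewrite lerXn2r ?nnegrE // (le_trans (normr_ge0 r)).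
by rewrite lef_pV2 ?posrE // (lt_le_trans lt_0_1q).
Qed.

Lemma sum_geometric_series_err (C : numFieldType) (I : finType) (r : I -> C) q K :
  (forall i, `|r i| <= q) -> q < 1 ->
  `|\sum_(0 <= k < K) \sum_i r i ^+ k.+1 - \sum_i r i / (1 - r i)|
    <= q ^+ K.+1 / (1 - q) *+ #|I|.
Proof.
move=> le_rq lt_q1; rewrite exchange_big /= -sumrB (le_trans (ler_norm_sum _ _ _)) //.
by rewrite -sumr_const ler_sum // => i _; apply: geometric_series_err.
Qed.

Lemma cvg_geometric_rate (R : realType) (u : nat -> R) (l C q : R) :
  0 <= q -> q < 1 -> (forall K, `|u K - l| <= C * q ^+ K) -> u @ \oo --> (l : R^o).
Proof.
move=> ge0_q lt_q1 rate.
have err0 : (fun K => C * q ^+ K) @ \oo --> (0 : R^o).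
  by rewrite -(mulr0 C); apply: cvgMl_tmp; apply: cvg_expr; rewrite ger0_norm.
apply: (@squeeze_cvgr _ _ _ _ (fun K => l - C * q ^+ K) (fun K => l + C * q ^+ K)).
- by near=> K; rewrite -ler_distl.
- by rewrite -[X in _ --> X]subr0; apply: cvgB => //; apply: cvg_cst.
- by rewrite -[X in _ --> X]addr0; apply: cvgD => //; apply: cvg_cst.
Unshelve. all: end_near.
Qed.

Section RealMatrices.
Variable R : realType.
Local Notation rc := (real_complex R).

Lemma cmxE m (A : 'M[R]_m) : cmx A = map_mx rc A.
Proof. by []. Qed.

Lemma cmxX m (A : 'M[R]_m) p : cmx (A ^+ p) = cmx A ^+ p.
Proof. by rewrite cmxE rmorphXn. Qed.

Lemma eigvals_char_poly m (A : 'M[R]_m) :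
  char_poly (cmx A) = \prod_(z <- eigvals A) ('X - z%:P).
Proof.
rewrite /eigvals; case: closed_field_poly_normal => zs /= ->.
by rewrite (monicP (char_poly_monic _)) scale1r.
Qed.

Lemma eigvals_similar_trig m (A : 'M[R]_m) P T :
  P \in unitmx -> is_trig_mx T -> cmx A = invmx P *m T *m P ->
  perm_eq [seq T i i | i <- enum 'I_m] (eigvals A).
Proof.
move=> unitP trigT simA; apply: prod_XsubC_eq.
rewrite -eigvals_char_poly simA char_poly_similar // char_poly_trig //.
by rewrite big_map big_enum.
Qed.

Lemma norm_eigvals_le m (A : 'M[R]_m) z :
  z \in eigvals A -> `|z| <= rc (spectral_radius A).
Proof.
move=> Az; have -> : `|z| = rc (Normc.normc z) by case: z {Az} => a b; rewrite normc_def.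
by rewrite lecR; apply: le_bigmax_seq.
Qed.

Lemma schur_cmx m (A : 'M[R]_m.+1) : exists P T : 'M[R[i]]_m.+1,
  [/\ P \in unitmx, is_trig_mx T, cmx A = invmx P *m T *m P
    & forall i, T i i \in eigvals A].
Proof.
have [P /unitarymx_unit unitP] := Schur (cmx A) (ltn0Sn m).
rewrite /similar_to conjumx // => trigT.
have simA : cmx A = invmx P *m (P *m cmx A *m invmx P) *m P.
  by rewrite !mulmxA mulVmx // mul1mx mulmxKV.
exists P, (P *m cmx A *m invmx P); split=> // i.
rewrite -(perm_mem (eigvals_similar_trig unitP trigT simA)).
by apply: map_f; rewrite mem_enum.
Qed.

Lemma norm_rc (x : R) : `|rc x| = rc `|x|.
Proof. by rewrite normc_def /= expr0n addr0 sqrtr_sqr. Qed.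

Lemma rc_mxtrace m (X : 'M[R]_m) : rc (\tr X) = \tr (cmx X).
Proof. by rewrite cmxE trace_map_mx. Qed.

Section SchurForm.
Variables (m : nat) (A : 'M[R]_m.+1) (P T : 'M[R[i]]_m.+1).
Hypotheses (unitP : P \in unitmx) (trigT : is_trig_mx T).
Hypothesis simA : cmx A = invmx P *m T *m P.

Lemma rc_mxtrace_exp p : rc (\tr (A ^+ p)) = \sum_i T i i ^+ p.
Proof.
by rewrite rc_mxtrace cmxX simA exp_similar // mxtrace_similar // mxtrace_exp_trig.
Qed.

Lemma cmx_resolvent c : cmx (c%:M - A) = (rc c)%:M - invmx P *m T *m P.
Proof. by rewrite cmxE map_mxB map_scalar_mx -cmxE simA. Qed.

Variable c : R.
Hypothesis c_notin_diag : forall i, T i i != rc c.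

Lemma unitmx_resolvent_similar : c%:M - A \in unitmx.
Proof.
by rewrite -(map_unitmx rc) -cmxE cmx_resolvent unitmx_resolvent_similar_trig.
Qed.

Lemma rc_mxtrace_resolvent :
  rc (\tr (A *m invmx (c%:M - A))) = \sum_i T i i / (rc c - T i i).
Proof.
rewrite rc_mxtrace cmxE map_mxM map_invmx -!cmxE cmx_resolvent simA.
exact: mxtrace_resolvent_similar_trig.
Qed.

End SchurForm.

Section ResolventSeries.
Variables (m : nat) (A : 'M[R]_m.+1) (c : R).
Hypothesis lt_rho_c : spectral_radius A < c.

Let eigvals_neq_c z : z \in eigvals A -> z != rc c.
Proof.
move=> Az; apply/eqP => zc; have := norm_eigvals_le Az.
by rewrite zc norm_rc lecR leNgt (lt_le_trans lt_rho_c (ler_norm c)).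
Qed.

Lemma unitmx_resolvent : c%:M - A \in unitmx.
Proof.
have [P [T [unitP trigT simA eigT]]] := schur_cmx A.
by apply: (unitmx_resolvent_similar unitP trigT simA) => i; apply: eigvals_neq_c.
Qed.

Lemma cvg_series_trace_resolvent :
  [series \tr (A ^+ k.+1) / c ^+ k.+1]_k @ \oo --> \tr (A *m invmx (c%:M - A)).
Proof.
have [P [T [unitP trigT simA eigT]]] := schur_cmx A.
have normT i : `|T i i| <= rc (spectral_radius A) := norm_eigvals_le (eigT i).
have ge0_rho : 0 <= spectral_radius A.
  by rewrite -ler0c (le_trans (normr_ge0 _) (normT ord0)).
have gt0_c : 0 < c := le_lt_trans ge0_rho lt_rho_c.
pose q := spectral_radius A / c; pose r i := T i i / rc c.
have ge0_q : 0 <= q by rewrite /q divr_ge0 // ltW.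
have lt_q1 : q < 1 by rewrite /q ltr_pdivrMr // mul1r.
have norm_r i : `|r i| <= rc q.
  rewrite normrM normfV norm_rc (gtr0_norm gt0_c) /q fmorph_div ler_pM2r ?normT //.
  by rewrite invr_gt0 ltcR.
clearbody q.
have termE k : rc (\tr (A ^+ k.+1) / c ^+ k.+1) = \sum_i r i ^+ k.+1.
  rewrite fmorph_div /= (rc_mxtrace_exp unitP trigT simA) rmorphXn mulr_suml.
  by apply: eq_bigr => i _; rewrite exprMn exprVn.
have limitE : rc (\tr (A *m invmx (c%:M - A))) = \sum_i r i / (1 - r i).
  rewrite (rc_mxtrace_resolvent unitP trigT simA) => [|i]; last exact: eigvals_neq_c.
  apply: eq_bigr => i _; have nz_c : rc c != 0 by rewrite eq_complex /= gt_eqF.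
  have := eigvals_neq_c (eigT i); rewrite /r -subr_eq0 => nz_Tc.
  by field; rewrite nz_c subr_eq0 eq_sym -subr_eq0.
apply: (@cvg_geometric_rate _ _ _ (m.+1%:R * q / (1 - q)) q) => // K.
rewrite -lecR -norm_rc rmorphB /= seriesEnat rmorph_sum /=.
under eq_bigr do rewrite termE.
rewrite limitE (le_trans (sum_geometric_series_err K norm_r _)) ?ltcR // card_ord.
rewrite rmorphM /= fmorph_div /= !rmorphM /= rmorphB /= rmorph1 !rmorphXn /= rmorph_nat.
rewrite -mulr_natl exprS le_eqVlt; apply/predU1l.
by field; rewrite subr_eq0 eq_sym lt_eqF // ltcR.
Qed.

End ResolventSeries.

Lemma cmx_adj m (X : 'M[R]_m) : (cmx X)^t* = cmx X^T.
Proof. by apply/matrixP => i j; rewrite !mxE; apply: conjc_real. Qed.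

Lemma dnorm_mulmx_cmx_tr m (X : 'M[R]_m) u :
  '[u *m cmx X^T] = (u *m cmx (X^T *m X) *m u^t*) 0 0.
Proof. by rewrite dotmxE trmx_mul map_mxM cmx_adj trmxK !cmxE map_mxM !mulmxA. Qed.

Lemma rc_sqrt_Re (z : R[i]) : 0 <= z -> rc (Num.sqrt (complex.Re z)) = sqrtC z.
Proof.
move=> ge0_z; have realz := ger0_real ge0_z.
have ge0_Re : 0 <= complex.Re z by rewrite -ler0c RRe_real.
rewrite -{2}(RRe_real realz) -{2}(sqr_sqrtr ge0_Re) rmorphXn /= sqrCK //.
by rewrite ler0c sqrtr_ge0.
Qed.

Lemma singvals_gram m (X : 'M[R]_m) : exists2 Q : 'M[R[i]]_m, Q \is unitarymx &
  cmx (X^T *m X) = invmx Q *m diag_mx (\row_j '[row j Q *m cmx X^T]) *m Q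
  /\ perm_eq (map rc (singvals X)) [seq sqrtC '[row j Q *m cmx X^T] | j <- enum 'I_m].
Proof.
set G := cmx (X^T *m X).
have /orthomx_spectralP specG : G \is normalmx.
  by apply/normalmxP; rewrite /G cmx_adj trmx_mul trmxK.
have unitaryQ := spectral_unitarymx G; have unitQ := unitarymx_unit unitaryQ.
set Q := spectralmx G in specG unitaryQ unitQ *; set d := spectral_diag G in specG.
have dE j : d 0 j = '[row j Q *m cmx X^T].
  rewrite dnorm_mulmx_cmx_tr -/G -dotmxE dotmx_row specG !mulmxA mulmxV // mul1mx.
  by rewrite -invmx_unitary // mulmxK // mxE eqxx.
have {}specG : G = invmx Q *m diag_mx (\row_j '[row j Q *m cmx X^T]) *m Q.
  by rewrite specG; congr (_ *m diag_mx _ *m _); apply/rowP => j; rewrite mxE dE.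
exists Q => //; split=> //.
have := perm_map (fun z => rc (Num.sqrt (complex.Re z)))
  (eigvals_similar_trig unitQ (diag_mx_is_trig _) specG).
move=> /permPl permE; rewrite /singvals -map_comp -permE -map_comp.
rewrite [X in perm_eq X _](@eq_map _ _ _ (fun j => sqrtC '[row j Q *m cmx X^T])) //.
move=> j /=.
by rewrite !mxE eqxx mulr1n rc_sqrt_Re ?dnorm_ge0.
Qed.

Lemma sigma_min_le m (M : 'M[R]_m) s : s \in singvals M -> sigma_min M <= s.
Proof. exact: head_sort_le. Qed.

Lemma sigma_min_ge0 m (M : 'M[R]_m) : 0 <= sigma_min M.
Proof.
have [nilM|/head_sort_mem] := eqVneq (singvals M) [::]; first by rewrite /sigma_min nilM.
by rewrite -/(sigma_min M) => /mapP[z _ ->]; apply: sqrtr_ge0.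
Qed.

Lemma dnorm_ge_sigma_min m (M : 'M[R]_m) u :
  rc (sigma_min M) ^+ 2 * '[u] <= '[u *m cmx M^T].
Proof.
have [Q unitaryQ [gramM svM]] := singvals_gram M.
rewrite dnorm_mulmx_cmx_tr gramM; apply: spectral_form_ge => // j; rewrite mxE.
have : sqrtC '[row j Q *m cmx M^T] \in map rc (singvals M).
  by rewrite (perm_mem svM); apply: map_f; rewrite mem_enum.
case/mapP=> s Ms sE; rewrite -[X in _ <= X]sqrtCK sE lerXn2r ?nnegrE ?ler0c //.
- exact: sigma_min_ge0.
- exact: le_trans (sigma_min_ge0 M) (sigma_min_le Ms).
- by rewrite lecR sigma_min_le.
Qed.

Section InverseBound.
Variables (m : nat) (M : 'M[R]_m.+1).
Hypothesis unitM : M \in unitmx.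

Let unit_cmx_tr : cmx M^T \in unitmx.
Proof. by rewrite cmxE map_unitmx unitmx_tr. Qed.

Lemma sigma_min_gt0 : 0 < sigma_min M.
Proof.
have [Q unitaryQ [_ svM]] := singvals_gram M.
have nil_sv : singvals M != [::].
  by rewrite -size_eq0 -(size_map rc) (perm_size svM) size_map size_enum_ord.
have /mapP[j _ sigmaE] :
    rc (sigma_min M) \in [seq sqrtC '[row j Q *m cmx M^T] | j <- enum 'I_m.+1].
  by rewrite -(perm_mem svM) map_f // head_sort_mem.
rewrite -ltcR sigmaE sqrt_dnorm_gt0; apply/eqP => rowQM0.
have := row_unitarymxP unitaryQ j j; rewrite eqxx.
rewrite -[row j Q](mulmxK unit_cmx_tr) rowQM0 mul0mx linear0l.
by move/eqP; rewrite eq_sym oner_eq0.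
Qed.

(* sigma_min is defined through M^T M, which controls u M^T; the bound is transferred
   to M^-1 through the adjoint of (M^T)^-1. *)
Lemma dnorm_mulmx_invmx_le u :
  '[u *m cmx (invmx M)] <= (rc (sigma_min M) ^+ 2)^-1 * '[u].
Proof.
have gt0_sigma2 : 0 < rc (sigma_min M) ^+ 2 by rewrite exprn_gt0 // ltcR sigma_min_gt0.
have -> : cmx (invmx M) = (cmx (invmx M)^T)^t* by rewrite cmx_adj trmxK.
apply: dnorm_mulmx_adj_le => v; rewrite mulrC ler_pdivlMr //.
have := dnorm_ge_sigma_min M (v *m cmx (invmx M)^T).
by rewrite -mulmxA !cmxE -map_mxM -trmx_mul mulmxV // trmx1 map_mx1 mulmx1 mulrC.
Qed.

Lemma mxtrace_mul_invmx_le (A : 'M[R]_m.+1) :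
  `|\tr (A *m invmx M)| <= nuclear_norm A / sigma_min M.
Proof.
have [Q unitaryQ [_ svA]] := singvals_gram A.
rewrite -lecR -norm_rc rc_mxtrace cmxE map_mxM -!cmxE mxtrace_mulC.
rewrite (mxtrace_unitary _ unitaryQ).
have nuclearE : rc (nuclear_norm A) = \sum_j sqrtC '[row j Q *m cmx A^T].
  transitivity (\sum_(z <- map rc (singvals A)) z).
    by rewrite big_map rmorph_sum.
  by rewrite (perm_big _ svA) big_map big_enum.
rewrite fmorph_div /= nuclearE mulr_suml (le_trans (ler_norm_sum _ _ _)) //.
apply: ler_sum => j _.
rewrite mulmxA dotmx_mulmxl cmx_adj mulrC.
have [CS _] := CauchySchwarz_sqrt (@dotmx _ m.+1)
  (row j Q *m cmx (invmx M)) (row j Q *m cmx A^T).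
rewrite (le_trans CS) // ler_wpM2r ?sqrt_dnorm_ge0 //.
have ge0_isigma : 0 <= (rc (sigma_min M))^-1 by rewrite invr_ge0 ler0c sigma_min_ge0.
rewrite -(sqrCK ge0_isigma) ler_sqrtC ?nnegrE ?dnorm_ge0 ?exprn_ge0 //.
have := dnorm_mulmx_invmx_le (row j Q).
by rewrite (row_unitarymxP unitaryQ) eqxx mulr1 exprVn.
Qed.

End InverseBound.

End RealMatrices.

Theorem theorem1 (R : realType) (n : nat) (B : 'M[R]_n.+1)
  (Bge0 : forall i j, 0 <= B i j)
  (Brow : forall i, \sum_j B i j <= 1)
  (Hrho : spectral_radius (B ^+ 2) < zeta B * n.+1%:R) :
  let M := zeta B * n.+1%:R *: 1%:M - B ^+ 2 in
  ([series rep_term B k.+1]_k @ \oo --> \tr (B ^+ 2 *m invmx M)) /\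
  \tr (B ^+ 2 *m invmx M) <= nuclear_norm (B ^+ 2) / sigma_min M.
Proof.
rewrite scalemx1 /=; set c := zeta B * n.+1%:R in Hrho *.
have termE : (fun k => rep_term B k.+1) = (fun k => \tr ((B ^+ 2) ^+ k.+1) / c ^+ k.+1).
  by apply/funext => k; rewrite /rep_term /c exprM -exprMn.
split; first by rewrite termE; apply: cvg_series_trace_resolvent.
apply: le_trans (ler_norm _) _.
exact/mxtrace_mul_invmx_le/unitmx_resolvent.
Qed.
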